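(* For positive integers $d$ and $q$, $\hom(K_{d,d}, H_q) \leq 2q \cdot c_q^{2d}$.
   Context: $K_{d,d}$ is the complete bipartite graph with parts of size $d$. $H_q$ is the graph (loops allowed) on vertex set $\{1,\dots,q\}$ in which $u,v$ (possibly equal) are adjacent iff $u+v \geq q$. $\hom(G,H)$ is the number of graph homomorphisms from $G$ to $H$. For $q \geq 1$, $c_q := \sqrt{\lfloor (q+2)^2/4 \rfloor}$. *)

From mathcomp Require Import all_boot all_order all_algebra.
Set Implicit Arguments. Unset Strict Implicit. Unset Printing Implicit Defensive.
Import Order.TTheory GRing.Theory Num.Theory.

(* A graph (loops allowed) on a finite vertex type V is given by a
   symmetric edge relation e : rel V. *)

Definition hom_count (V W : finType) (G : rel V) (H : rel W) : nat :=
  #|[set f : {ffun V -> W} | [forall x, forall y, G x y ==> H (f x) (f y)]]|.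

Arguments hom_count : clear implicits.
Definition Kdd_rel (d : nat) : rel ('I_d + 'I_d) :=
  fun u v => match u, v with
             | inl _, inr _ | inr _, inl _ => true
             | _, _ => false
             end.

(* H_q: vertex set {1,...,q}, encoded as 'I_q with i : 'I_q standing for
   i+1; u ~ v (possibly equal) iff u + v >= q. *)
Definition Hq_rel (q : nat) : rel 'I_q :=
  fun i j => (q <= i.+1 + j.+1)%N.

Definition c_q (R : rcfType) (q : nat) : R :=
  Num.sqrt (((q + 2) ^ 2 %/ 4)%N)%:R.
Arguments Kdd_rel d : clear implicits.
Arguments Hq_rel q : clear implicits.

From mathcomp Require Import all_boot all_order all_algebra zify.
Import Order.TTheory GRing.Theory Num.Theory.

(* Let f be a homomorphism K_{d,d} -> H_q and let a be the least value of f on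
   the left part.  The left vertex attaining a is adjacent to every right
   vertex, so f sends the right part into {v | v >= q - a - 2} (0-based
   labels, as in Hq_rel): f lies in a box with (q - a)^d (min q (a + 2))^d
   elements.  The two side lengths sum to at most q + 2, so by AM-GM each box
   has at most floor((q+2)^2/4)^d elements, and there are q choices of a. *)

Lemma card_ord_geq (q k : nat) : #|[pred u : 'I_q | k <= u]| = q - k.
Proof.
rewrite -sum1_card big_mkcond /= -(big_mkord xpredT (fun i => if k <= i then 1 else 0)).
elim: q => [|q IHq]; first by rewrite big_geq.
by rewrite big_nat_recr //= IHq; case: leqP; lia.
Qed.

Lemma card_le_sum_cover {T I : finType} (A : {pred T}) (B : I -> {pred T}) :
  (forall x, x \in A -> exists i, x \in B i) -> #|A| <= \sum_i #|B i|.
Proof.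
move=> coverA; rewrite -sum1_card.
apply: (@leq_trans (\sum_(x in A) \sum_i (x \in B i : nat))).
  apply: leq_sum => x /coverA[i xBi].
  by rewrite (bigD1 i) //= xBi.
rewrite exchange_big /=; apply: leq_sum => i _.
rewrite -sum1_card [X in _ <= X]big_mkcond /= big_mkcond /=.
by apply: leq_sum => x _; case: (x \in A); case: (x \in B i).
Qed.

Definition Kdd_Hq_box (d q a : nat) : forall x : 'I_d + 'I_d, pred 'I_q :=
  fun x => match x with
           | inl _ => [pred u : 'I_q | a <= u]
           | inr _ => [pred v : 'I_q | q - a.+2 <= v]
           end.

Lemma card_Kdd_Hq_box (d q a : nat) :
  #|(family (Kdd_Hq_box d q a) : {pred {ffun 'I_d + 'I_d -> 'I_q}})|
    = ((q - a) * (q - (q - a.+2))) ^ d.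
Proof.
rewrite card_family foldrE big_map big_enum /= big_sumType /=.
by rewrite !card_ord_geq !prod_nat_const !card_ord expnMn.
Qed.

Lemma Kdd_Hq_box_side_le (q a : nat) :
  (q - a) * (q - (q - a.+2)) <= (q + 2) ^ 2 %/ 4.
Proof.
rewrite leq_divRL // mulnC.
apply: leq_trans (nat_AGM2 _ _) _.
by rewrite leq_exp2r //; lia.
Qed.

Lemma Kdd_Hq_hom_in_box (d q : nat) (f : {ffun 'I_d + 'I_d -> 'I_q}) :
  (0 < d)%N -> [forall x, forall y, Kdd_rel d x y ==> Hq_rel q (f x) (f y)] ->
  exists a : 'I_q, f \in family (Kdd_Hq_box d q a).
Proof.
move=> hd /forallP hom_f.
pose xmin := [arg min_(x < Ordinal hd) f (inl x)].
exists (f (inl xmin)); apply/familyP => -[x|y] /=; rewrite inE.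
  by rewrite /xmin; case: arg_minnP => // i _; apply.
by have /forallP /(_ (inr y)) := hom_f (inl xmin); rewrite /= /Hq_rel; lia.
Qed.

Lemma hom_count_Kdd_Hq_le (d q : nat) : (0 < d)%N ->
  hom_count _ _ (Kdd_rel d) (Hq_rel q) <= q * ((q + 2) ^ 2 %/ 4) ^ d.
Proof.
move=> hd; rewrite /hom_count.
apply: leq_trans
  (card_le_sum_cover _ (fun a : 'I_q => family (Kdd_Hq_box d q a)) _) _.
  by move=> f; rewrite inE; apply: Kdd_Hq_hom_in_box.
rewrite -[q in q * _]card_ord -sum_nat_const.
by apply: leq_sum => a _; rewrite card_Kdd_Hq_box leq_exp2r ?Kdd_Hq_box_side_le.
Qed.

Local Open Scope ring_scope.

Theorem lemma3p5 (R : rcfType) (d q : nat) (hd : (0 < d)%N) (hq : (0 < q)%N) :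
  ((hom_count _ _ (Kdd_rel d) (Hq_rel q))%:R : R) <= 2 * q%:R * (c_q R q) ^+ (2 * d).
Proof.
rewrite exprM /c_q sqr_sqrtr ?ler0n // -natrX -(natrM R 2 q) -natrM ler_nat.
apply: leq_trans (hom_count_Kdd_Hq_le d q hd) _.
by rewrite -mulnA leq_pmull.
Qed.
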